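(* Let $g:\mathbb{R}^N\to\mathbb{R}\cup\{+\infty\}$ be proper and lower semi-continuous, let $f:\mathbb{R}^N\to\mathbb{R}$ be continuously differentiable such that, for some $\mathbf{L}\in\mathbb{S}_{++}(N)$, the gradient of $f\circ\mathbf{L}^{-1/2}$ is $1$-Lipschitz continuous, and assume $f^g:=f+g$ is bounded from below. Fix $a>0$, $x_0\in\mathbb{R}^N$, and a sequence of matrices $\mathbf{D}_k\in\mathbb{R}^{N\times R}$. For $k\ge0$ and $\boldsymbol\beta\in\mathbb{R}^R$ let $y^{(\boldsymbol\beta)}_k:=x_k+\mathbf{D}_k\boldsymbol\beta$ and $\ell(x;y):=g(x)+f(y)+\langle\nabla f(y),x-y\rangle$. Suppose the sequences $(x_k)_{k}$, $(\boldsymbol\beta_k)_k$, and symmetric matrices $(\mathbf{L}_k)_k$, $(\mathbf{T}_k)_k$ satisfy for all $k\ge0$: $$\ell(x_{k+1};y_k^{(\boldsymbol\beta_k)})+\tfrac12\|x_{k+1}-y_k^{(\boldsymbol\beta_k)}\|_{\mathbf{T}_k}^2\le f^g(x_k),$$ $\mathbf{T}_k-\mathbf{L}_k-a\mathbf{I}\in\mathbb{S}_+(N)$, and $$f(x_{k+1})\le f(y_k^{(\boldsymbol\beta_k)})+\langle\nabla f(y_k^{(\boldsymbol\beta_k)}),x_{k+1}-y_k^{(\boldsymbol\beta_k)}\rangle+\tfrac12\|x_{k+1}-y_k^{(\boldsymbol\beta_k)}\|_{\mathbf{L}_k}^2.$$ Suppose $(\mathbf{T}_k)_{k\in\mathbb{N}}$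 is bounded. Then $(f^g(x_k))_{k\in\mathbb{N}}$ is non-increasing. If, additionally, $g$ is continuous on its domain and $\operatorname{dist}(0,\partial f^g(x_{k+1}))\to0$ as $k\to\infty$, then every limit point of $(x_{k+1})_{k\in\mathbb{N}}$ is a stationary point of $f^g$.
   Context: $\mathbb{S}_{+}(N)$ (resp. $\mathbb{S}_{++}(N)$) denotes the set of symmetric positive semi-definite (resp. positive definite) $N\times N$ real matrices; $\mathbf{I}$ is the identity; $\|x\|_{\mathbf{V}}^2:=\langle x,\mathbf{V}x\rangle$. The Fréchet subdifferential $\hat\partial h(\bar x)$ of $h:\mathbb{R}^N\to\mathbb{R}\cup\{+\infty\}$ at $\bar x\in\operatorname{dom}h$ is the set of $v$ with $\liminf_{x\to\bar x,x\ne\bar x}\frac{h(x)-h(\bar x)-\langle v,x-\bar x\rangle}{\|x-\bar x\|}\ge0$; the limiting subdifferential $\partial h(\bar x)$ is the set of $v$ for which there exist $x_k\to\bar x$ with $h(x_k)\to h(\bar x)$ and $v_k\in\hat\partial h(x_k)$ with $v_k\to v$ (both empty outside $\operatorname{dom}h$); $\operatorname{dist}(0,\emptyset):=+\infty$. A stationary point of $h$ is a point $\bar x$ with $0\in\partial h(\bar x)$. *)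

From HB Require Import structures.
From mathcomp Require Import all_boot all_order all_algebra.
From mathcomp Require Import all_classical all_reals all_analysis.
Set Implicit Arguments. Unset Strict Implicit. Unset Printing Implicit Defensive.
Import Order.TTheory GRing.Theory Num.Theory.
Import numFieldNormedType.Exports.
Local Open Scope classical_set_scope.
Local Open Scope ring_scope.

Section Defs.
Variables (R : realType) (N : nat).
Implicit Types (x y v : 'cV[R]_N) (A : 'M[R]_N).

Definition dotv x y : R := (x^T *m y) 0 0.
Definition enorm x : R := Num.sqrt (dotv x x).
Definition qnorm2 A x : R := dotv x (A *m x).

Definition symm_mx A : Prop := A^T = A.
Definition psd A : Prop := symm_mx A /\ forall x, 0 <= qnorm2 A x.
Definition pd A : Prop := symm_mx A /\ forall x, x != 0 -> 0 < qnorm2 A x.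

Definition grad (f : 'cV[R]_N -> R) x : 'cV[R]_N :=
  \col_i ('d f x (delta_mx i 0 : 'cV[R]_N)).

Definition cont_diff (f : 'cV[R]_N -> R) : Prop :=
  (forall x, differentiable f x) /\ continuous (grad f).

Definition edom (h : 'cV[R]_N -> \bar R) := [set x | h x < +oo]%E.
Definition proper_fn (h : 'cV[R]_N -> \bar R) : Prop :=
  (forall x, -oo < h x)%E /\ exists x, (h x < +oo)%E.
Definition lsc (h : 'cV[R]_N -> \bar R) : Prop :=
  forall x (t : R), (t%:E < h x)%E -> \forall y \near x, (t%:E < h y)%E.

(* Frechet subdifferential: liminf_{z -> xb, z <> xb}
   (h z - h xb - <v, z - xb>)/||z - xb|| >= 0, written out *)
Definition frechet_subdiff (h : 'cV[R]_N -> \bar R) xb : set 'cV[R]_N :=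
  [set v | h xb \is a fin_num /\
     forall eps : R, 0 < eps -> exists2 delta : R, 0 < delta &
       forall z, 0 < enorm (z - xb) < delta ->
         (h z - h xb - (dotv v (z - xb))%:E >= (- (eps * enorm (z - xb)))%:E)%E].

Definition lim_subdiff (h : 'cV[R]_N -> \bar R) xb : set 'cV[R]_N :=
  [set v | h xb \is a fin_num /\
     exists (xs vs : nat -> 'cV[R]_N),
       [/\ xs @ \oo --> xb, (h \o xs) @ \oo --> h xb,
           (forall k, frechet_subdiff h (xs k) (vs k)) & vs @ \oo --> v]].

(* dist(0, S) = inf_{v in S} ||v||, with dist(0, emptyset) = +oo *)
Definition dist0 (S : set 'cV[R]_N) : \bar R :=
  ereal_inf [set (enorm v)%:E | v in S].

Definition stationary (h : 'cV[R]_N -> \bar R) xb : Prop := lim_subdiff h xb 0.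

End Defs.

From HB Require Import structures.
From mathcomp Require Import all_boot all_order all_algebra.
From mathcomp Require Import all_classical all_reals all_analysis.
From mathcomp Require Import lra.
Set Implicit Arguments. Unset Strict Implicit. Unset Printing Implicit Defensive.
Import Order.TTheory GRing.Theory Num.Theory.
Import numFieldNormedType.Exports.
Local Open Scope classical_set_scope.
Local Open Scope ring_scope.

(* Each iteration is a descent step for F := f + g: the L_k-majorization of f
   at y_k, together with T_k - L_k >= a I >= 0, turns the proximal inequality
   into F(x_{k+1}) <= F(x_k).  For the second part let x_{phi n + 1} -> xb.
   Monotonicity bounds F above along the subsequence (by a finite value, as
   points with a nonempty subdifferential have finite F), so lower semicontinuity
   of g puts xb in dom g, and continuity of g on its domain then gives
   F(x_{phi n + 1}) -> F(xb).  Since dist(0, dF(x_{k+1})) -> 0, a diagonal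
   argument through the definition of the limiting subdifferential yields
   0 in dF(xb). *)

Lemma distr_lt_half {K : numFieldType} {V : normedZmodType K} (u v w : V) (e : K) :
  `|u - v| < e / 2 -> `|v - w| < e / 2 -> `|u - w| < e.
Proof.
move=> uv vw; rewrite [e]splitr.
exact: le_lt_trans (ler_distD v u w) (ltrD uv vw).
Qed.

Lemma near_increasing_nat (phi : nat -> nat) (P : nat -> Prop) :
  {homo phi : n m / (n < m)%N} ->
  (\forall k \near \oo, P k) -> \forall n \near \oo, P (phi n).
Proof.
move=> phi_incr [K _ KP]; have id_le_phi n : (n <= phi n)%N.
  by elim: n => // n IH; exact: leq_ltn_trans IH (phi_incr _ _ (ltnSn n)).
by exists K => // n /= Kn; apply: KP; exact: leq_trans Kn (id_le_phi n).
Qed.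

Lemma cvg_dist_lt_invS {K : realType} {V : normedModType K} (u : nat -> V) l :
  (forall n, `|u n - l| < n.+1%:R^-1) -> u @ \oo --> l.
Proof.
move=> u_near; apply/cvgrPdist_lt => e e0; near=> n.
rewrite distrC; apply: lt_trans (u_near n) _.
by near: n; exact: (near_infty_natSinv_lt (PosNum e0)).
Unshelve. all: by end_near.
Qed.

Section Euclidean.
Variables (R : realType) (N : nat).
Implicit Types (d v : 'cV[R]_N) (T L : 'M[R]_N).

Lemma dotv_sqr v : dotv v v = \sum_i v i 0 ^+ 2.
Proof. by rewrite /dotv mxE; apply: eq_bigr => i _; rewrite mxE expr2. Qed.

Lemma dotv_ge0 v : 0 <= dotv v v.
Proof. by rewrite dotv_sqr; apply: sumr_ge0 => i _; exact: sqr_ge0. Qed.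

Lemma mx_norm_le_enorm v : `|v| <= enorm v.
Proof.
rewrite [leLHS]/Num.Def.normr /= mx_normrE; apply: bigmax_le => [|[i j] _] /=.
  exact: sqrtr_ge0.
rewrite (ord1 j) /enorm dotv_sqr -(sqrtr_sqr (v i 0)) ler_sqrt; last first.
  by apply: sumr_ge0 => k _; exact: sqr_ge0.
by rewrite (bigD1 i) //= lerDl; apply: sumr_ge0 => k _; exact: sqr_ge0.
Qed.

Lemma qnorm2_subr_scalar T L (a : R) d :
  qnorm2 (T - L - a%:M) d = qnorm2 T d - qnorm2 L d - a * dotv d d.
Proof.
rewrite /qnorm2 /dotv !mulmxBl !mulmxDr !mulmxN !mxE mul_scalar_mx mulr_sumr.
by congr (_ - _); apply: eq_bigr => i _; rewrite [(a *: d) i 0]mxE mulrCA.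
Qed.

Lemma psd_qnorm2_le T L (a : R) d :
  0 <= a -> psd (T - L - a%:M) -> qnorm2 L d <= qnorm2 T d.
Proof.
move=> a_ge0 [_ /(_ d)]; rewrite qnorm2_subr_scalar.
have := mulr_ge0 a_ge0 (dotv_ge0 d); lra.
Qed.

Lemma majorized_step_descent (f : 'cV[R]_N -> R) (g : 'cV[R]_N -> \bar R)
    (x x' y p : 'cV[R]_N) (T L : 'M[R]_N) (a : R) :
  0 <= a -> psd (T - L - a%:M) ->
  f x' <= f y + dotv p (x' - y) + 2^-1 * qnorm2 L (x' - y) ->
  (g x' + (f y + dotv p (x' - y) + 2^-1 * qnorm2 T (x' - y))%:E
     <= (f x)%:E + g x)%E ->
  ((f x')%:E + g x' <= (f x)%:E + g x)%E.
Proof.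
move=> a_ge0 psdTL majL; apply: le_trans; rewrite addeC leeD2l // lee_fin.
apply: le_trans majL _; rewrite lerD2l ler_wpM2l ?invr_ge0 //.
exact: psd_qnorm2_le psdTL.
Qed.

End Euclidean.

Section LimitingSubdifferential.
Variables (R : realType) (N : nat).
Implicit Types (h : 'cV[R]_N -> \bar R) (u : nat -> 'cV[R]_N) (xb v : 'cV[R]_N).

Lemma lim_subdiff_approx h xb v :
  h xb \is a fin_num ->
  (forall e : R, 0 < e -> exists z w,
     [/\ `|z - xb| < e, h z \is a fin_num, `|fine (h z) - fine (h xb)| < e,
         frechet_subdiff h z w & `|w - v| < e]) ->
  lim_subdiff h xb v.
Proof.
move=> hxb_fin approx; split => //.
have [xs xs_approx] := choice (fun n => approx n.+1%:R^-1 ltac:(by rewrite invr_gt0)).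
have [vs vs_approx] := choice xs_approx.
exists xs, vs; split.
- by apply: cvg_dist_lt_invS => n; have [] := vs_approx n.
- rewrite -(fineK hxb_fin); apply/fine_cvgP; split.
    by apply: nearW => n; have [] := vs_approx n.
  by apply: cvg_dist_lt_invS => n; have [] := vs_approx n.
- by move=> n; have [] := vs_approx n.
- by apply: cvg_dist_lt_invS => n; have [] := vs_approx n.
Qed.

Lemma lim_subdiff_closed h u xb v :
  h xb \is a fin_num -> u @ \oo --> xb -> h \o u @ \oo --> h xb ->
  (forall e, 0 < e -> \forall n \near \oo,
     exists2 w, lim_subdiff h (u n) w & `|w - v| < e) ->
  lim_subdiff h xb v.
Proof.
move=> hxb_fin u_xb hu_hxb approx; apply: lim_subdiff_approx => // e e0.
have e2 : 0 < e / 2 by rewrite divr_gt0.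
move: hu_hxb; rewrite -(fineK hxb_fin) => /fine_cvgP[_ hu_hxb].
have [n [[un_xb hun_hxb] [w [hun_fin [xs [vs [xs_un hxs_hun xs_vs vs_w]]]] w_v]]] :=
  filter_ex (filterI (filterI (cvgr_dist_lt _ _ u_xb _ e2) (cvgr_dist_lt _ _ hu_hxb _ e2))
                     (approx _ e2)).
move: hxs_hun; rewrite -(fineK hun_fin) => /fine_cvgP[hxs_fin hxs_hun].
have [m [[[xsm_un hxsm_fin] hxsm_hun] vsm_w]] :=
  filter_ex (filterI (filterI (filterI (cvgr_dist_lt _ _ xs_un _ e2) hxs_fin)
                              (cvgr_dist_lt _ _ hxs_hun _ e2)) (cvgr_dist_lt _ _ vs_w _ e2)).
exists (xs m), (vs m); split => //.
- by apply: (distr_lt_half (v := u n)); rewrite distrC.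
- by apply: (distr_lt_half (v := fine (h (u n)))); rewrite distrC.
- by apply: (distr_lt_half (v := w)); rewrite // distrC.
Qed.

Lemma lsc_bounded_lt_pinfty h u xb (c : R) :
  lsc h -> u @ \oo --> xb -> (\forall n \near \oo, h (u n) <= c%:E)%E ->
  (h xb < +oo)%E.
Proof.
move=> h_lsc u_xb hu_le; rewrite ltey; apply/eqP => hxb.
have hu_gt : \forall n \near \oo, (c%:E < h (u n))%E.
  by apply: (u_xb [set y | c%:E < h y]%E); apply: (h_lsc xb c); rewrite hxb ltry.
have [n [hun_le hun_gt]] := filter_ex (filterI hu_le hu_gt).
by move: hun_gt; rewrite ltNge hun_le.
Qed.

Lemma continuous_edom_cvg h u xb :
  {within edom h, continuous h} -> (h xb < +oo)%E -> u @ \oo --> xb ->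
  (\forall n \near \oo, h (u n) < +oo)%E -> h \o u @ \oo --> h xb.
Proof.
move=> h_cont hxb_lt u_xb hu_lt.
have u_within : u n @[n --> \oo] --> within (edom h) (nbhs xb).
  by move=> P /= xbP; apply: filterS2 (u_xb _ xbP) hu_lt => n; apply.
apply: cvg_comp u_within _.
by rewrite (@nbhs_subspace_in _ (edom h) xb hxb_lt); exact: h_cont.
Qed.

Lemma cvg_add_lsc_bounded (f : 'cV[R]_N -> R) g u xb (c : R) :
  {for xb, continuous f} -> lsc g -> {within edom g, continuous g} ->
  (-oo < g xb)%E -> u @ \oo --> xb ->
  (\forall n \near \oo, (f (u n))%:E + g (u n) <= c%:E)%E ->
  g xb \is a fin_num /\ (fun n => (f (u n))%:E + g (u n))%E @ \oo --> ((f xb)%:E + g xb)%E.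
Proof.
move=> f_cont g_lsc g_cont gxb_gtNy u_xb Fu_le.
have fu_fxb : f \o u @ \oo --> f xb := cvg_comp _ _ u_xb f_cont.
have gu_le : \forall n \near \oo, (g (u n) <= (c - f xb + 1)%:E)%E.
  apply: filterS2 Fu_le (cvgr_dist_lt _ _ fu_fxb _ ltr01) => n Fun_le fun_near.
  rewrite -leeBrDl // in Fun_le; apply: le_trans Fun_le _.
  rewrite -EFinB lee_fin; move: fun_near => /(le_lt_trans (ler_norm _)) /=; lra.
have gxb_lt := lsc_bounded_lt_pinfty g_lsc u_xb gu_le.
split; first by rewrite fin_numE gt_eqF ?lt_eqF.
apply: cvgeD (fin_num_adde_defr _ _) _ _ => //.
  by apply: cvg_EFin; [exact: nearW|].
apply: continuous_edom_cvg g_cont gxb_lt u_xb _.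
by apply: filterS gu_le => n /le_lt_trans; apply; rewrite ltry.
Qed.

Lemma dist0_cvg0_near (S : nat -> set 'cV[R]_N) :
  (fun k => dist0 (S k)) @ \oo --> 0%E ->
  forall e, 0 < e -> \forall k \near \oo, exists2 v, S k v & enorm v < e.
Proof.
move=> /fine_cvgP[dist_fin /cvgr_dist_lt dist_lt] e e0.
apply: filterS (filterI dist_fin (dist_lt e e0)) => k [kfin].
rewrite sub0r normrN /= => /(le_lt_trans (ler_norm _)).
rewrite -lte_fin fineK // => /ereal_inf_lt[_ [v Sv <-]].
by rewrite lte_fin; exists v.
Qed.
End LimitingSubdifferential.

Theorem mainTheorem4 (R : realType) (N M : nat)
  (g : 'cV[R]_N -> \bar R) (f : 'cV[R]_N -> R) (L : 'M[R]_N) (a : R)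
  (D : nat -> 'M[R]_(N, M)) (x : nat -> 'cV[R]_N) (beta : nat -> 'cV[R]_M)
  (Lk Tk : nat -> 'M[R]_N) :
  proper_fn g -> lsc g -> cont_diff f ->
  pd L ->
  (* S = L^{-1/2}: the symm_mx positive definite square root of L^{-1},
     and grad (f o L^{-1/2}) is 1-Lipschitz *)
  (exists S : 'M[R]_N, [/\ pd S, S *m S *m L = 1%:M &
      forall z w, enorm (grad (fun u => f (S *m u)) z - grad (fun u => f (S *m u)) w)
                  <= enorm (z - w)]) ->
  (exists m : R, forall z, (m%:E <= (f z)%:E + g z)%E) ->
  0 < a ->
  (forall k, symm_mx (Lk k) /\ symm_mx (Tk k)) ->
  (forall k, let y := x k + D k *m beta k in
     (g (x k.+1) + (f y + dotv (grad f y) (x k.+1 - y)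
                    + 2^-1 * qnorm2 (Tk k) (x k.+1 - y))%:E
        <= (f (x k))%:E + g (x k))%E) ->
  (forall k, psd (Tk k - Lk k - a%:M)) ->
  (forall k, let y := x k + D k *m beta k in
     f (x k.+1) <= f y + dotv (grad f y) (x k.+1 - y)
                   + 2^-1 * qnorm2 (Lk k) (x k.+1 - y)) ->
  (exists C : R, forall k i j, `|Tk k i j| <= C) ->
  (forall k, ((f (x k.+1))%:E + g (x k.+1) <= (f (x k))%:E + g (x k))%E) /\
  ({within edom g, continuous g} ->
   (fun k => dist0 (lim_subdiff (fun z => (f z)%:E + g z) (x k.+1))) @ \oo --> 0%E ->
   forall xb : 'cV[R]_N,
     (exists phi : nat -> nat, {homo phi : n m / (n < m)%N} /\
        (fun n => x (phi n).+1) @ \oo --> xb) ->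
     stationary (fun z => (f z)%:E + g z) xb).
Proof.
move=> [g_gtNy _] g_lsc [f_diff _] _ _ _ a_gt0 _ prox_step psd_gap majL _.
set F := fun z => ((f z)%:E + g z)%E.
have descent k : (F (x k.+1) <= F (x k))%E.
  exact: majorized_step_descent (ltW a_gt0) (psd_gap k) (majL k) (prox_step k).
split => // g_cont dist_cvg xb [phi [phi_incr u_xb]].
set u := fun n => x (phi n).+1 in u_xb.
have small_subgrad := dist0_cvg0_near dist_cvg.
have [K _ FxK_fin] : \forall k \near \oo, F (x k.+1) \is a fin_num.
  by apply: filterS (small_subgrad 1 ltr01) => k [v []].
set B := fine (F (x K.+1)).
have Fu_le : \forall n \near \oo, (F (u n) <= B%:E)%E.
  apply: (near_increasing_nat (P := fun k => F (x k.+1) <= B%:E)%E) phi_incr _.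
  exists K => // k /= Kk; rewrite /B fineK; last exact: FxK_fin (leqnn K).
  by apply: ((nonincreasing_seqP (F \o x)).1 descent); rewrite ltnS.
have [gxb_fin Fu_Fxb] := cvg_add_lsc_bounded
  (differentiable_continuous (f_diff xb)) g_lsc g_cont (g_gtNy xb) u_xb Fu_le.
apply: (lim_subdiff_closed (u := u)) u_xb Fu_Fxb _ => [|e e0].
  by rewrite fin_numD gxb_fin.
apply: filterS (near_increasing_nat phi_incr (small_subgrad e e0)) => n [w Fw w_lt].
by exists w; rewrite // subr0 (le_lt_trans (mx_norm_le_enorm w)).
Qed.
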